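(* Consider an edge-to-edge tiling of a surface in which every corner of every tile carries a positive real number (its angle), such that the angles at every vertex sum to $2\pi$. Suppose the number $k$ of distinct angle values occurring at degree $3$ vertices satisfies $1\le k\le 5$, and let $S$ be the set of angle combinations occurring at degree $3$ vertices. Then, after suitably naming these $k$ distinct values by $\alpha,\beta,\gamma,\delta,\epsilon$ (the first $k$ of these letters), there is a row $(N;O)$ in the following list with exactly $k$ letters such that $N\subseteq S\subseteq N\cup O$: $k=1$: $(\{\alpha^3\};\emptyset)$. $k=2$: $(\{\alpha\beta^2\};\emptyset)$. $k=3$: $(\{\alpha\beta\gamma\};\{\alpha^3\})$; $(\{\alpha\beta^2,\alpha^2\gamma\};\emptyset)$; $(\{\alpha\beta^2,\gamma^3\};\emptyset)$. $k=4$: $(\{\alpha\beta\gamma,\alpha\delta^2\};\{\beta^2\delta\})$; $(\{\alpha\beta\gamma,\alpha\delta^2\};\{\beta^3\})$; $(\{\alpha\beta\gamma,\alpha^2\delta\};\{\beta\delta^2\})$; $(\{\alpha\beta\gamma,\alpha^2\delta\};\{\beta^3\})$; $(\{\alpha\beta\gamma,\delta^3\};\emptyset)$; $(\{\alpha\beta^2,\gamma\delta^2\};\{\alpha^2\delta\})$; $(\{\alpha\beta^2,\alpha^2\gamma,\delta^3\};\emptyset)$. $k=5$: with $N=\{\alpha\beta\gamma,\alpha\delta\epsilon\}$: $O=\{\beta\delta^2,\beta^2\epsilon\}$, $\{\beta\delta^2,\gamma\epsilon^2,\alpha^3\}$, $\{\beta\delta^2,\gamma^2\epsilon\}$, $\{\beta\delta^2,\gamma^3\}$,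 or $\{\beta\delta^2,\epsilon^3\}$; with $N=\{\alpha\beta\gamma,\alpha\delta^2,\alpha^2\epsilon\}$: $O=\{\beta\epsilon^2\}$, $\{\beta^2\delta\}$, or $\{\beta^3\}$; with $N=\{\alpha\beta\gamma,\alpha\delta^2,\beta\epsilon^2\}$: $O=\{\alpha^2\epsilon\}$, $\{\gamma^2\delta\}$, or $\{\gamma^3\}$; with $N=\{\alpha\beta\gamma,\alpha\delta^2,\beta^2\epsilon\}$: $O=\{\gamma\epsilon^2\}$, $\{\gamma^2\delta\}$, or $\{\gamma^3\}$; with $N=\{\alpha\beta\gamma,\alpha\delta^2,\delta\epsilon^2\}$: $O=\{\beta^2\epsilon\}$ or $\{\beta^3\}$; with $N=\{\alpha\beta\gamma,\alpha\delta^2,\epsilon^3\}$: $O=\{\beta^2\delta\}$; with $N=\{\alpha\beta\gamma,\alpha^2\delta,\beta^2\epsilon\}$: $O=\{\alpha\epsilon^2\}$, $\{\gamma\delta^2\}$, or $\{\gamma^3\}$; with $N=\{\alpha\beta\gamma,\alpha^2\delta,\delta^2\epsilon\}$: $O=\{\beta^2\epsilon\}$ or $\{\beta^3\}$; with $N=\{\alpha\beta\gamma,\alpha^2\delta,\epsilon^3\}$: $O=\{\beta\delta^2\}$; with $N=\{\alpha\beta\gamma,\delta\epsilon^2\}$: $O=\{\alpha^3\}$; with $N=\{\alpha\beta^2,\gamma\delta^2,\alpha^2\epsilon\}$: $O=\{\beta\gamma^2\}$ or $\{\delta\epsilon^2\}$; with $N=\{\alpha\beta^2,\gamma\delta^2,\epsilon^3\}$: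 $O=\{\alpha^2\delta\}$.
   Context: An angle combination at a degree $3$ vertex is the multiset of the three angle values at its corners, written multiplicatively: e.g. $\alpha\beta^2$ denotes a degree $3$ vertex whose corners have angles $\alpha,\beta,\beta$, and $\alpha^3$ one whose three corners all have angle $\alpha$. The letters $\alpha,\beta,\gamma,\delta,\epsilon$ denote pairwise distinct real numbers. In each row, $N$ is the ''necessary part'' and $O$ the ''optional part''. *)

From Stdlib Require Import Reals List Permutation Arith.
Import ListNotations.
Open Scope R_scope.

(* A tiling is abstracted by its vertex/corner angle data:
   [corners v] is the list of the angles at the corners around vertex v
   (one entry per corner, so the degree of v is [length (corners v)]). *)

(* Letters: alpha = 0, beta = 1, gamma = 2, delta = 3, epsilon = 4.
   An angle combination at a degree 3 vertex is a list of three letters,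
   understood up to permutation (a multiset). *)
Definition combo := list nat.

(* A row (k; N; O): number of letters, necessary part, optional part. *)
Definition row := (nat * list combo * list combo)%type.

Definition rows : list row := ([
  (1%nat, [[0;0;0]], []);
  (2%nat, [[0;1;1]], []);
  (3%nat, [[0;1;2]], [[0;0;0]]);
  (3%nat, [[0;1;1]; [0;0;2]], []);
  (3%nat, [[0;1;1]; [2;2;2]], []);
  (4%nat, [[0;1;2]; [0;3;3]], [[1;1;3]]);
  (4%nat, [[0;1;2]; [0;3;3]], [[1;1;1]]);
  (4%nat, [[0;1;2]; [0;0;3]], [[1;3;3]]);
  (4%nat, [[0;1;2]; [0;0;3]], [[1;1;1]]);
  (4%nat, [[0;1;2]; [3;3;3]], []);
  (4%nat, [[0;1;1]; [2;3;3]], [[0;0;3]]);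
  (4%nat, [[0;1;1]; [0;0;2]; [3;3;3]], []);
  (5%nat, [[0;1;2]; [0;3;4]], [[1;3;3]; [1;1;4]]);
  (5%nat, [[0;1;2]; [0;3;4]], [[1;3;3]; [2;4;4]; [0;0;0]]);
  (5%nat, [[0;1;2]; [0;3;4]], [[1;3;3]; [2;2;4]]);
  (5%nat, [[0;1;2]; [0;3;4]], [[1;3;3]; [2;2;2]]);
  (5%nat, [[0;1;2]; [0;3;4]], [[1;3;3]; [4;4;4]]);
  (5%nat, [[0;1;2]; [0;3;3]; [0;0;4]], [[1;4;4]]);
  (5%nat, [[0;1;2]; [0;3;3]; [0;0;4]], [[1;1;3]]);
  (5%nat, [[0;1;2]; [0;3;3]; [0;0;4]], [[1;1;1]]);
  (5%nat, [[0;1;2]; [0;3;3]; [1;4;4]], [[0;0;4]]);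
  (5%nat, [[0;1;2]; [0;3;3]; [1;4;4]], [[2;2;3]]);
  (5%nat, [[0;1;2]; [0;3;3]; [1;4;4]], [[2;2;2]]);
  (5%nat, [[0;1;2]; [0;3;3]; [1;1;4]], [[2;4;4]]);
  (5%nat, [[0;1;2]; [0;3;3]; [1;1;4]], [[2;2;3]]);
  (5%nat, [[0;1;2]; [0;3;3]; [1;1;4]], [[2;2;2]]);
  (5%nat, [[0;1;2]; [0;3;3]; [3;4;4]], [[1;1;4]]);
  (5%nat, [[0;1;2]; [0;3;3]; [3;4;4]], [[1;1;1]]);
  (5%nat, [[0;1;2]; [0;3;3]; [4;4;4]], [[1;1;3]]);
  (5%nat, [[0;1;2]; [0;0;3]; [1;1;4]], [[0;4;4]]);
  (5%nat, [[0;1;2]; [0;0;3]; [1;1;4]], [[2;3;3]]);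
  (5%nat, [[0;1;2]; [0;0;3]; [1;1;4]], [[2;2;2]]);
  (5%nat, [[0;1;2]; [0;0;3]; [3;3;4]], [[1;1;4]]);
  (5%nat, [[0;1;2]; [0;0;3]; [3;3;4]], [[1;1;1]]);
  (5%nat, [[0;1;2]; [0;0;3]; [4;4;4]], [[1;3;3]]);
  (5%nat, [[0;1;2]; [3;4;4]], [[0;0;0]]);
  (5%nat, [[0;1;1]; [2;3;3]; [0;0;4]], [[1;2;2]]);
  (5%nat, [[0;1;1]; [2;3;3]; [0;0;4]], [[3;4;4]]);
  (5%nat, [[0;1;1]; [2;3;3]; [4;4;4]], [[0;0;3]])
])%nat.

Definition deg3_value {V : Type} (corners : V -> list R) (x : R) : Prop :=
  exists v, length (corners v) = 3%nat /\ In x (corners v).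

Definition occurs {V : Type} (corners : V -> list R) (name : nat -> R) (t : combo) : Prop :=
  exists v, length (corners v) = 3%nat /\ Permutation (corners v) (map name t).

(* Name the k distinct angle values x 0, ..., x (k-1).  The corners of a
   degree 3 vertex form a combination: a multiset of three letters, stored as
   a sorted triple.  Every occurring combination sums to 2 PI, so any two
   occurring combinations have equal sums.  These are linear equations in the
   letters; a set of combinations whose equations force two distinct letters
   to coincide cannot be the set of occurring combinations.

   The proof is a verified exhaustive search.  For each k <= 5 it runs over
   all sets of sorted triples over k letters, deciding triple by triple
   whether it belongs to the set; a branch is cut as soon as the chosen
   triples force two letters to coincide, which is detected by fraction-free
   Gaussian elimination over the integers on the forms "sum of one
   combination minus sum of another".  At every surviving set in which each
   letter occurs, some renaming of the letters must match a row (N; O). *)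

From Stdlib Require Import Reals List Permutation Arith ZArith Lia Lra Mergesort Classical.
Import ListNotations.
Open Scope R_scope.

(* Short-circuiting boolean quantifiers over lists; unlike [existsb] and
   [forallb] they stop early under the call-by-value strategy of [vm_compute]. *)
Fixpoint anyb {A : Type} (f : A -> bool) (l : list A) : bool :=
  match l with [] => false | a :: l' => if f a then true else anyb f l' end.
Fixpoint allb {A : Type} (f : A -> bool) (l : list A) : bool :=
  match l with [] => true | a :: l' => if f a then allb f l' else false end.

Lemma anyb_existsb {A : Type} (f : A -> bool) (l : list A) : anyb f l = existsb f l.
Proof. induction l as [|a l IH]; simpl; [|destruct (f a)]; auto. Qed.

Lemma allb_forallb {A : Type} (f : A -> bool) (l : list A) : allb f l = forallb f l.
Proof. induction l as [|a l IH]; simpl; [|destruct (f a)]; auto. Qed.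

Definition mem (c : combo) (L : list combo) : bool :=
  if in_dec (list_eq_dec Nat.eq_dec) c L then true else false.

Lemma mem_In (c : combo) (L : list combo) : mem c L = true <-> In c L.
Proof. unfold mem; destruct in_dec; split; auto; discriminate. Qed.

Definition sumc (x : nat -> R) (t : combo) : R := fold_right Rplus 0 (map x t).

Lemma sum_perm (l1 l2 : list R) :
  Permutation l1 l2 -> fold_right Rplus 0 l1 = fold_right Rplus 0 l2.
Proof. induction 1; simpl; lra. Qed.

Definition equal_sums (x : nat -> R) (E : list combo) : Prop :=
  forall b b', In b E -> In b' E -> sumc x b = sumc x b'.

Definition canon (t : combo) : combo := NatSort.sort t.

Definition allc (k : nat) : list combo :=
  flat_map (fun a => flat_map (fun b => map (fun d => [a; b; d]) (seq b (k - b)))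
                              (seq a (k - a))) (seq 0 k).

Lemma canon_in_allc (k : nat) (t : combo) :
  length t = 3%nat -> (forall i, In i t -> (i < k)%nat) -> In (canon t) (allc k).
Proof.
  intros Hlen Hk.
  pose proof (NatSort.Permuted_sort t) as Hperm.
  pose proof (NatSort.LocallySorted_sort t) as Hsorted.
  assert (Hlen' : length (canon t) = 3%nat)
    by (unfold canon; rewrite <- (Permutation_length Hperm); exact Hlen).
  assert (Hk' : forall i, In i (canon t) -> (i < k)%nat)
    by (intros i Hi; apply Hk, (Permutation_in _ (Permutation_sym Hperm) Hi)).
  unfold canon in *.
  destruct (NatSort.sort t) as [|a [|b [|d [|]]]]; try discriminate.
  inversion Hsorted as [| |? ? ? Hbd Hab]; subst.
  inversion Hbd as [| |? ? ? _ Hbd']; subst.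
  change (Nat.leb a b = true) in Hab; change (Nat.leb b d = true) in Hbd'.
  apply Nat.leb_le in Hab; apply Nat.leb_le in Hbd'.
  assert (Hd : (d < k)%nat) by (apply Hk'; simpl; auto).
  unfold allc; apply in_flat_map; exists a; split; [apply in_seq; lia|].
  apply in_flat_map; exists b; split; [apply in_seq; lia|].
  apply in_map_iff; exists d; split; [reflexivity|apply in_seq; lia].
Qed.

(* A linear form in the letters, given by its integer coefficients. *)
Definition form := list Z.

Fixpoint feval (f : form) (x : nat -> R) : R :=
  match f with [] => 0 | a :: f' => IZR a * x O + feval f' (fun i => x (S i)) end.

Fixpoint fadd (f g : form) : form :=
  match f, g with
  | [], _ => g
  | _, [] => f
  | a :: f', b :: g' => (a + b)%Z :: fadd f' g'
  end.

Definition fscale (c : Z) (f : form) : form := map (Z.mul c) f.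

Definition fsub (f g : form) : form := fadd f (fscale (-1) g).

Fixpoint unit (i : nat) : form := match i with O => [1%Z] | S i => 0%Z :: unit i end.

Definition cvec (t : combo) : form := fold_right (fun i f => fadd (unit i) f) [] t.

Definition is_zero (f : form) : bool := forallb (Z.eqb 0) f.

Lemma feval_add (f g : form) (x : nat -> R) : feval (fadd f g) x = feval f x + feval g x.
Proof.
  revert g x; induction f as [|a f IH]; intros [|b g] x; simpl; try lra.
  rewrite IH, plus_IZR; ring.
Qed.

Lemma feval_scale (c : Z) (f : form) (x : nat -> R) : feval (fscale c f) x = IZR c * feval f x.
Proof.
  revert x; induction f as [|a f IH]; intros x; simpl; [ring|].
  rewrite IH, mult_IZR; ring.
Qed.

Lemma feval_sub (f g : form) (x : nat -> R) : feval (fsub f g) x = feval f x - feval g x.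
Proof. unfold fsub; rewrite feval_add, feval_scale; simpl; ring. Qed.

Lemma feval_unit (i : nat) (x : nat -> R) : feval (unit i) x = x i.
Proof. revert x; induction i as [|i IH]; intros x; simpl; [|rewrite IH]; ring. Qed.

Lemma feval_cvec (t : combo) (x : nat -> R) : feval (cvec t) x = sumc x t.
Proof.
  induction t as [|i t IH]; simpl; [reflexivity|].
  rewrite feval_add, feval_unit, IH; reflexivity.
Qed.

Lemma feval_is_zero (f : form) (x : nat -> R) : is_zero f = true -> feval f x = 0.
Proof.
  revert x; induction f as [|a f IH]; intros x H; simpl in *; [reflexivity|].
  apply andb_prop in H as [Ha Hf]; destruct a; try discriminate Ha.
  rewrite IH by exact Hf; ring.
Qed.

Fixpoint pivot (f : form) : option (nat * Z) :=
  match f with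
  | [] => None
  | a :: f' => if Z.eqb a 0 then option_map (fun '(p, c) => (S p, c)) (pivot f')
               else Some (O, a)
  end.

Definition reduce (r t : form) : form :=
  match pivot r with
  | None => t
  | Some (p, c) => fsub (fscale c t) (fscale (nth p t 0%Z) r)
  end.

Definition reduce_all (rows : list form) (t : form) : form :=
  fold_left (fun t r => reduce r t) rows t.

(* An echelon basis of the span of [gens]; zero rows are dropped so that
   there are never more rows than letters. *)
Definition echelon_step (rows : list form) (g : form) : list form :=
  let r := reduce_all rows g in if is_zero r then rows else rows ++ [r].

Definition echelon (gens : list form) : list form := fold_left echelon_step gens [].

(* The forms "sum of b minus sum of b0", which vanish when all sums agree. *)
Definition gens (E : list combo) : list form :=
  match E with [] => [] | b0 :: E' => map (fun b => fsub (cvec b) (cvec b0)) E' end.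

(* [degenerate k E]: the equal-sum equations of E force x i = x j for some
   letters j < i < k, i.e. x i - x j lies in the span of [gens E]. *)
Definition degenerate (k : nat) (E : list combo) : bool :=
  let rows := echelon (gens E) in
  anyb (fun i => anyb (fun j => is_zero (reduce_all rows (fsub (unit i) (unit j))))
                      (seq 0 i)) (seq 0 k).

Lemma pivot_nonzero (f : form) (p : nat) (c : Z) : pivot f = Some (p, c) -> c <> 0%Z.
Proof.
  revert p; induction f as [|a f IH]; intros p H; simpl in H; [discriminate|].
  destruct (Z.eqb_spec a 0).
  - destruct (pivot f) as [[q d]|] eqn:E; simpl in H; [|discriminate].
    injection H as _ <-; exact (IH q eq_refl).
  - injection H as _ <-; exact n.
Qed.

(* Reduction is an invertible step modulo r: the result equals c * t - a * r
   with c nonzero. *)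
Lemma reduce_eval (r t : form) (x : nat -> R) :
  exists c a, c <> 0%Z /\ feval (reduce r t) x = IZR c * feval t x - IZR a * feval r x.
Proof.
  unfold reduce; destruct (pivot r) as [[p c]|] eqn:E.
  - exists c, (nth p t 0%Z); split; [exact (pivot_nonzero r p c E)|].
    rewrite feval_sub, !feval_scale; reflexivity.
  - exists 1%Z, 0%Z; split; [discriminate|simpl; ring].
Qed.

Section Elimination.

Variable x : nat -> R.

Definition vanishes (f : form) : Prop := feval f x = 0.

Lemma reduce_vanishes (r t : form) : vanishes r -> vanishes t -> vanishes (reduce r t).
Proof.
  unfold vanishes; intros Hr Ht; destruct (reduce_eval r t x) as [c [a [_ ->]]].
  rewrite Hr, Ht; ring.
Qed.

Lemma reduce_reflects (r t : form) : vanishes r -> vanishes (reduce r t) -> vanishes t.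
Proof.
  unfold vanishes; intros Hr Hred; destruct (reduce_eval r t x) as [c [a [Hc Heq]]].
  rewrite Heq, Hr in Hred.
  assert (IZR c <> 0) by (apply not_0_IZR; exact Hc).
  apply (Rmult_eq_reg_l (IZR c)); lra.
Qed.

Lemma reduce_all_vanishes (rows : list form) (t : form) :
  Forall vanishes rows -> vanishes t -> vanishes (reduce_all rows t).
Proof.
  unfold reduce_all; intros Hrows; revert t; induction Hrows as [|r rows Hr _ IH]; intros t Ht; simpl;
    auto using reduce_vanishes.
Qed.

Lemma reduce_all_reflects (rows : list form) (t : form) :
  Forall vanishes rows -> vanishes (reduce_all rows t) -> vanishes t.
Proof.
  unfold reduce_all; intros Hrows; revert t; induction Hrows as [|r rows Hr _ IH]; intros t Ht; simpl in *;
    eauto using reduce_reflects.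
Qed.

Lemma echelon_vanishes (gs : list form) : Forall vanishes gs -> Forall vanishes (echelon gs).
Proof.
  intros Hgs; unfold echelon; generalize (@nil form) (Forall_nil vanishes).
  induction Hgs as [|g gs Hg _ IH]; intros rows Hrows; simpl; [assumption|].
  apply IH; unfold echelon_step; destruct is_zero; [assumption|].
  apply Forall_app; split; [assumption|].
  constructor; [apply reduce_all_vanishes|]; auto.
Qed.

Lemma gens_vanish (E : list combo) : equal_sums x E -> Forall vanishes (gens E).
Proof.
  intros HE; destruct E as [|b0 E]; simpl; [constructor|].
  apply Forall_forall; intros g Hg; apply in_map_iff in Hg as [b [<- Hb]].
  unfold vanishes; rewrite feval_sub, !feval_cvec, (HE b b0); simpl; auto; ring.
Qed.

Lemma degenerate_sound (k : nat) (E : list combo) :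
  equal_sums x E -> degenerate k E = true ->
  exists i j, (j < i < k)%nat /\ x i = x j.
Proof.
  intros HE Hdeg; unfold degenerate in Hdeg.
  rewrite anyb_existsb in Hdeg; apply existsb_exists in Hdeg as [i [Hi Hdeg]].
  rewrite anyb_existsb in Hdeg; apply existsb_exists in Hdeg as [j [Hj Hzero]].
  apply in_seq in Hi; apply in_seq in Hj.
  exists i, j; split; [lia|].
  assert (Hv : vanishes (fsub (unit i) (unit j))).
  { apply (reduce_all_reflects (echelon (gens E))).
    - apply echelon_vanishes, gens_vanish, HE.
    - apply feval_is_zero, Hzero. }
  unfold vanishes in Hv; rewrite feval_sub, !feval_unit in Hv; lra.
Qed.

End Elimination.

(* A pattern: a renamed row, as (necessary part, necessary and optional part). *)
Definition pattern := (list combo * list combo)%type.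

Definition matches (q : pattern) (L : list combo) : bool :=
  if allb (fun t => mem t L) (fst q) then allb (fun c => mem c (snd q)) L else false.

Definition covers (k : nat) (L : list combo) : bool :=
  allb (fun i => anyb (fun c => anyb (Nat.eqb i) c) L) (seq 0 k).

Definition leaf_ok (ps : list pattern) (k : nat) (L : list combo) : bool :=
  if covers k L then anyb (fun q => matches q L) ps else true.

Fixpoint search (ps : list pattern) (k : nat) (cands acc : list combo) : bool :=
  match cands with
  | [] => leaf_ok ps k acc
  | c :: cs =>
      if search ps k cs acc then
        (if degenerate k (c :: acc) then true else search ps k cs (c :: acc))
      else false
  end.

Section SearchSoundness.

Variables (ps : list pattern) (k : nat) (x : nat -> R) (P : combo -> Prop).
Hypothesis P_equal_sums : forall c c', P c -> P c' -> sumc x c = sumc x c'.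
Hypothesis x_injective : forall i j, (i < k)%nat -> (j < k)%nat -> x i = x j -> i = j.

Lemma search_sound (cands acc : list combo) :
  search ps k cands acc = true -> (forall c, In c acc -> P c) ->
  exists L, (forall c, In c L <-> In c acc \/ (In c cands /\ P c)) /\ leaf_ok ps k L = true.
Proof.
  revert acc; induction cands as [|c cs IH]; intros acc Hsearch Hacc; simpl in Hsearch.
  - exists acc; split; [simpl; tauto|exact Hsearch].
  - destruct (search ps k cs acc) eqn:Hskip; [|discriminate].
    destruct (classic (P c)) as [Pc|nPc].
    + assert (Hacc' : forall d, In d (c :: acc) -> P d) by (intros d [<-|Hd]; auto).
      destruct (degenerate k (c :: acc)) eqn:Hdeg.
      * exfalso.
        assert (HE : equal_sums x (c :: acc)) by (intros b b' Hb Hb'; auto).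
        destruct (degenerate_sound x k _ HE Hdeg) as [i [j [Hij Hx]]].
        assert (i = j) by (apply x_injective; auto; lia); lia.
      * destruct (IH (c :: acc) Hsearch Hacc') as [L [HL Hleaf]].
        exists L; split; [|exact Hleaf].
        intros d; rewrite HL; simpl; intuition (subst; auto).
    + destruct (IH acc Hskip Hacc) as [L [HL Hleaf]].
      exists L; split; [|exact Hleaf].
      intros d; rewrite HL; simpl; intuition (subst; auto; contradiction).
Qed.

End SearchSoundness.

Fixpoint inserts (a : nat) (l : list nat) : list (list nat) :=
  match l with [] => [[a]] | b :: t => (a :: b :: t) :: map (cons b) (inserts a t) end.

Fixpoint permutations (l : list nat) : list (list nat) :=
  match l with [] => [[]] | a :: t => flat_map (inserts a) (permutations t) end.

Lemma inserts_perm (a : nat) (l p : list nat) : In p (inserts a l) -> Permutation p (a :: l).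
Proof.
  revert p; induction l as [|b t IH]; intros p Hp; simpl in Hp.
  - destruct Hp as [<-|[]]; reflexivity.
  - destruct Hp as [<-|Hp]; [reflexivity|].
    apply in_map_iff in Hp as [q [<- Hq]].
    rewrite (IH q Hq); apply perm_swap.
Qed.

Lemma permutations_perm (l p : list nat) : In p (permutations l) -> Permutation p l.
Proof.
  revert p; induction l as [|a t IH]; intros p Hp; simpl in Hp.
  - destruct Hp as [<-|[]]; reflexivity.
  - apply in_flat_map in Hp as [q [Hq Hp]].
    rewrite (inserts_perm a q p Hp); apply perm_skip, IH, Hq.
Qed.

Definition relabel (p : list nat) (t : combo) : combo := canon (map (fun j => nth j p 0%nat) t).

Lemma relabel_perm (x : nat -> R) (p : list nat) (t : combo) :
  Permutation (map x (relabel p t)) (map (fun j => x (nth j p 0%nat)) t).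
Proof.
  unfold relabel, canon; rewrite <- (map_map (fun j => nth j p 0%nat) x).
  apply Permutation_map, Permutation_sym, NatSort.Permuted_sort.
Qed.

Definition patterns (k : nat) : list pattern :=
  flat_map (fun p => map (fun r => let '(_, Nec, Opt) := r in
                                   (map (relabel p) Nec, map (relabel p) (Nec ++ Opt)))
                         (filter (fun r => Nat.eqb (fst (fst r)) k) rows))
           (permutations (seq 0 k)).

Lemma patterns_spec (k : nat) (q : pattern) : In q (patterns k) ->
  exists p Nec Opt, Permutation p (seq 0 k) /\ In (k, Nec, Opt) rows /\
    q = (map (relabel p) Nec, map (relabel p) (Nec ++ Opt)).
Proof.
  intros Hq; apply in_flat_map in Hq as [p [Hp Hq]].
  apply in_map_iff in Hq as [[[k' Nec] Opt] [<- Hr]].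
  apply filter_In in Hr as [Hr Hk]; simpl in Hk; apply Nat.eqb_eq in Hk; subst k'.
  exists p, Nec, Opt; auto using permutations_perm.
Qed.

Lemma search_small (k : nat) : (1 <= k <= 5)%nat -> search (patterns k) k (allc k) [] = true.
Proof.
  intros Hk; destruct k as [|[|[|[|[|[|k]]]]]]; try lia; vm_compute; reflexivity.
Qed.

Lemma classify_combinations (k : nat) (x : nat -> R) (P : combo -> Prop) :
  (1 <= k <= 5)%nat ->
  (forall c c', P c -> P c' -> sumc x c = sumc x c') ->
  (forall i j, (i < k)%nat -> (j < k)%nat -> x i = x j -> i = j) ->
  (forall i, (i < k)%nat -> exists c, In c (allc k) /\ P c /\ In i c) ->
  exists p Nec Opt, Permutation p (seq 0 k) /\ In (k, Nec, Opt) rows /\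
    (forall t, In t Nec -> P (relabel p t)) /\
    (forall c, In c (allc k) -> P c -> exists t, In t (Nec ++ Opt) /\ c = relabel p t).
Proof.
  intros Hk Hsums Hinj Hocc.
  destruct (search_sound (patterns k) k x P Hsums Hinj (allc k) [] (search_small k Hk))
    as [L [HL Hleaf]]; [intros c []|].
  assert (HL' : forall c, In c L <-> In c (allc k) /\ P c) by (intros c; rewrite HL; simpl; tauto).
  assert (Hcovers : covers k L = true).
  { unfold covers; rewrite allb_forallb; apply forallb_forall; intros i Hi; apply in_seq in Hi.
    destruct (Hocc i ltac:(lia)) as [c [Hc [Pc Hic]]].
    rewrite anyb_existsb; apply existsb_exists; exists c; split; [apply HL'; auto|].
    rewrite anyb_existsb; apply existsb_exists; exists i; split; [exact Hic|apply Nat.eqb_refl]. }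
  unfold leaf_ok in Hleaf; rewrite Hcovers, anyb_existsb in Hleaf.
  apply existsb_exists in Hleaf as [q [Hq Hmatch]].
  destruct (patterns_spec k q Hq) as [p [Nec [Opt [Hp [Hrow ->]]]]].
  unfold matches in Hmatch; simpl in Hmatch.
  destruct (allb _ (map _ Nec)) eqn:HN; [|discriminate].
  rewrite allb_forallb, forallb_forall in HN, Hmatch.
  exists p, Nec, Opt; repeat split; [exact Hp|exact Hrow| |].
  - intros t Ht; apply HL', mem_In, HN, in_map, Ht.
  - intros c Hc Pc.
    pose proof (Hmatch c (proj2 (HL' c) (conj Hc Pc))) as Hcov.
    apply mem_In, in_map_iff in Hcov as [t [<- Ht]].
    exists t; auto.
Qed.

Lemma enumerate_values (D : R -> Prop) (k : nat) :
  (exists l : list R, NoDup l /\ length l = k /\ forall y, In y l <-> D y) ->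
  exists x : nat -> R,
    (forall i j, (i < k)%nat -> (j < k)%nat -> x i = x j -> i = j) /\
    (forall y, D y <-> exists i, (i < k)%nat /\ x i = y).
Proof.
  intros [l [Hnodup [<- Hl]]].
  exists (fun i => nth i l 0); split.
  - intros i j Hi Hj; apply (proj1 (NoDup_nth l 0) Hnodup); assumption.
  - intros y; rewrite <- Hl; split.
    + intros Hy; destruct (In_nth l y 0 Hy) as [i [Hi <-]]; eauto.
    + intros [i [Hi <-]]; apply nth_In, Hi.
Qed.

Lemma rename_letters (k : nat) (x : nat -> R) (D : R -> Prop) (p : list nat) :
  Permutation p (seq 0 k) ->
  (forall i j, (i < k)%nat -> (j < k)%nat -> x i = x j -> i = j) ->
  (forall y, D y <-> exists i, (i < k)%nat /\ x i = y) ->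
  (forall i j, (i < k)%nat -> (j < k)%nat ->
     x (nth i p 0%nat) = x (nth j p 0%nat) -> i = j) /\
  (forall y, D y <-> exists i, (i < k)%nat /\ x (nth i p 0%nat) = y).
Proof.
  intros Hp Hinj HD.
  assert (Hlen : length p = k) by (rewrite (Permutation_length Hp); apply length_seq).
  assert (Hin : forall m, In m p <-> (m < k)%nat).
  { intros m; split; intros H.
    - apply (Permutation_in _ Hp), in_seq in H; lia.
    - apply (Permutation_in _ (Permutation_sym Hp)), in_seq; lia. }
  assert (Hnth : forall i, (i < k)%nat -> (nth i p 0 < k)%nat)
    by (intros i Hi; apply Hin, nth_In; lia).
  assert (Hnodup : NoDup p) by exact (Permutation_NoDup (Permutation_sym Hp) (seq_NoDup k 0)).
  split.
  - intros i j Hi Hj Heq; apply Hinj in Heq; auto.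
    apply (proj1 (NoDup_nth p 0%nat) Hnodup); [lia|lia|exact Heq].
  - intros y; rewrite HD; split.
    + intros [m [Hm <-]]; destruct (In_nth p m 0%nat (proj2 (Hin m) Hm)) as [i [Hi Hi']].
      exists i; split; [lia|rewrite Hi'; reflexivity].
    + intros [i [Hi <-]]; exists (nth i p 0%nat); auto.
Qed.

Lemma lift_list (k : nat) (x : nat -> R) (ys : list R) :
  (forall y, In y ys -> exists i, (i < k)%nat /\ x i = y) ->
  exists c, map x c = ys /\ forall i, In i c -> (i < k)%nat.
Proof.
  induction ys as [|y ys IH]; intros H.
  - exists []; split; [reflexivity|intros i []].
  - destruct (H y (or_introl eq_refl)) as [i [Hi <-]].
    destruct IH as [c [<- Hc]]; [intros z Hz; apply H; right; exact Hz|].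
    exists (i :: c); split; [reflexivity|intros j [<-|Hj]; auto].
Qed.

Lemma vertex_combination {V : Type} (corners : V -> list R) (k : nat) (x : nat -> R) :
  (forall y, deg3_value corners y <-> exists i, (i < k)%nat /\ x i = y) ->
  forall v, length (corners v) = 3%nat ->
  exists c, In c (allc k) /\ (forall i, In i c -> (i < k)%nat) /\
            Permutation (corners v) (map x c).
Proof.
  intros Hval v Hv.
  destruct (lift_list k x (corners v)) as [c [Hc Hck]].
  { intros y Hy; apply Hval; exists v; auto. }
  assert (Hperm := NatSort.Permuted_sort c).
  exists (canon c); split; [|split].
  - apply canon_in_allc; [rewrite <- Hv, <- Hc, length_map; reflexivity|exact Hck].
  - intros i Hi; apply Hck, (Permutation_in _ (Permutation_sym Hperm) Hi).
  - rewrite <- Hc; apply Permutation_map, Hperm.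
Qed.

Theorem theorem1 (V : Type) (corners : V -> list R)
  (Hpos : forall v, Forall (fun a => 0 < a) (corners v))
  (Hsum : forall v, fold_right Rplus 0 (corners v) = 2 * PI)
  (k : nat) (Hk : (1 <= k <= 5)%nat)
  (Hcount : exists l : list R, NoDup l /\ length l = k /\
              forall x, In x l <-> deg3_value corners x) :
  exists name : nat -> R,
    (forall i j, (i < k)%nat -> (j < k)%nat -> name i = name j -> i = j) /\
    (forall x, deg3_value corners x <-> exists i, (i < k)%nat /\ name i = x) /\
    exists (N O : list combo),
      In (k, N, O) rows /\
      (forall t, In t N -> occurs corners name t) /\
      (forall v, length (corners v) = 3%nat ->
         exists t, In t (N ++ O) /\ Permutation (corners v) (map name t)).
Proof.
  destruct (enumerate_values (deg3_value corners) k Hcount) as [x [Hinj Hval]].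
  set (P := fun c => exists v, length (corners v) = 3%nat /\ Permutation (corners v) (map x c)).
  assert (Hsums : forall c c', P c -> P c' -> sumc x c = sumc x c').
  { intros c c' [v [_ Hv]] [v' [_ Hv']]; unfold sumc.
    rewrite <- (sum_perm _ _ Hv), <- (sum_perm _ _ Hv'), !Hsum; reflexivity. }
  pose proof (vertex_combination corners k x Hval) as Hvertex.
  assert (Hocc : forall i, (i < k)%nat -> exists c, In c (allc k) /\ P c /\ In i c).
  { intros i Hi; destruct (proj2 (Hval (x i)) (ex_intro _ i (conj Hi eq_refl))) as [v [Hv Hxi]].
    destruct (Hvertex v Hv) as [c [Hc [Hck Hperm]]].
    pose proof (Permutation_in _ Hperm Hxi) as Hxc; apply in_map_iff in Hxc as [j [Hj Hjc]].
    exists c; split; [exact Hc|split; [exists v; auto|]].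
    rewrite <- (Hinj j i (Hck j Hjc) Hi Hj); exact Hjc. }
  destruct (classify_combinations k x P Hk Hsums Hinj Hocc)
    as [p [N [O [Hp [Hrow [HN HNO]]]]]].
  destruct (rename_letters k x _ p Hp Hinj Hval) as [Hinj' Hval'].
  exists (fun j => x (nth j p 0%nat)); split; [exact Hinj'|split; [exact Hval'|]].
  exists N, O; split; [exact Hrow|split].
  - intros t Ht; destruct (HN t Ht) as [v [Hv Hperm]].
    exists v; split; [exact Hv|eapply perm_trans; [exact Hperm|apply relabel_perm]].
  - intros v Hv; destruct (Hvertex v Hv) as [c [Hc [_ Hperm]]].
    destruct (HNO c Hc (ex_intro _ v (conj Hv Hperm))) as [t [Ht ->]].
    exists t; split; [exact Ht|eapply perm_trans; [exact Hperm|apply relabel_perm]].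
Qed.
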